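(* Let $X$ and $Y$ be non-negative random variables. Then $X\geq_{ss}Y$ if and only if $h(X)\geq_{ss}h(Y)$ for every star-shaped function $h$.
   Context: A function $h:[0,\infty)\to[0,\infty)$ with $h(0)=0$ is star-shaped (at the origin) if $x\mapsto h(x)/x$ is increasing (non-decreasing) on $(0,\infty)$. For non-negative random variables $X,Y$, $X\geq_{ss}Y$ (star-shaped order) means $\mathbb{E}\,u(X)\geq\mathbb{E}\,u(Y)$ for every star-shaped function $u$ for which the expectations exist. *)

From mathcomp Require Import all_boot all_order all_algebra.
From mathcomp Require Import all_classical all_reals all_analysis.
Set Implicit Arguments. Unset Strict Implicit. Unset Printing Implicit Defensive.
Import Order.TTheory GRing.Theory Num.Theory.
Local Open Scope ring_scope.

(* h : [0,oo) -> [0,oo) with h 0 = 0 and x |-> h x / x non-decreasing on (0,oo).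
   Only the values of h on [0,oo) matter. *)
Definition star_shaped (R : realType) (h : R -> R) : Prop :=
  [/\ h 0 = 0,
      (forall x, 0 <= x -> 0 <= h x) &
      (forall x y, 0 < x -> x <= y -> h x / x <= h y / y)].

Definition ss_ge (d : measure_display) (T : measurableType d) (R : realType)
    (P : probability T R) (X Y : T -> R) : Prop :=
  forall u : R -> R, star_shaped u ->
    P.-integrable setT (EFin \o (u \o X)) ->
    P.-integrable setT (EFin \o (u \o Y)) ->
    (\int[P]_t (u (Y t))%:E <= \int[P]_t (u (X t))%:E)%E.

From mathcomp Require Import all_boot all_order all_algebra.
From mathcomp Require Import all_classical all_reals all_analysis.
Import Order.TTheory GRing.Theory Num.Theory.
Set Implicit Arguments. Unset Strict Implicit. Unset Printing Implicit Defensive.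
Local Open Scope ring_scope.

(* Star-shaped functions are closed under composition, since
   u (h x) / x = (u (h x) / h x) * (h x / x) is a product of two non-negative
   non-decreasing factors (h being non-decreasing as well).  Hence the class of
   test functions u \o h is contained in the class of all u, and taking h the
   identity gives the converse. *)

Section StarShaped.
Variable R : realType.
Implicit Types (u h : R -> R) (x y : R).

Lemma star_shaped_id : star_shaped (@id R).
Proof.
split=> // x y x_gt0 le_xy.
by rewrite !divff // gt_eqF // (lt_le_trans x_gt0).
Qed.

Lemma star_shaped_nondecreasing h x y :
  star_shaped h -> 0 <= x -> x <= y -> h x <= h y.
Proof.
move=> [h0 h_ge0 h_div]; rewrite le_eqVlt => /predU1P[<- y_ge0|x_gt0 le_xy].
  by rewrite h0 h_ge0.
have y_gt0 : 0 < y := lt_le_trans x_gt0 le_xy.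
rewrite -[h x](mulfVK (lt0r_neq0 x_gt0)) -[h y](mulfVK (lt0r_neq0 y_gt0)).
apply: ler_pM (h_div _ _ x_gt0 le_xy) le_xy; last exact: ltW.
by rewrite divr_ge0 ?h_ge0 // ltW.
Qed.

Lemma divr_through x y z : y != 0 -> x / z = x / y * (y / z).
Proof. by move=> y_neq0; rewrite mulrA mulfVK. Qed.

Lemma star_shaped_comp u h :
  star_shaped u -> star_shaped h -> star_shaped (u \o h).
Proof.
move=> su sh; have [u0 u_ge0 u_div] := su; have [h0 h_ge0 h_div] := sh.
split=> [|x x_ge0|x y x_gt0 le_xy] /=; first by rewrite h0 u0.
  exact/u_ge0/h_ge0.
have y_gt0 : 0 < y := lt_le_trans x_gt0 le_xy.
have [->|hx_neq0] := eqVneq (h x) 0.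
  by rewrite u0 mul0r divr_ge0 ?u_ge0 ?h_ge0 // ltW.
have hx_gt0 : 0 < h x by rewrite lt_def hx_neq0 h_ge0 // ltW.
have le_hxy : h x <= h y := star_shaped_nondecreasing sh (ltW x_gt0) le_xy.
have hy_gt0 : 0 < h y := lt_le_trans hx_gt0 le_hxy.
rewrite (divr_through _ _ hx_neq0) (divr_through (u (h y)) _ (lt0r_neq0 hy_gt0)).
apply: ler_pM _ _ (u_div _ _ hx_gt0 le_hxy) (h_div _ _ x_gt0 le_xy).
  by rewrite divr_ge0 ?u_ge0 ?ltW.
by rewrite divr_ge0 ?ltW.
Qed.

End StarShaped.

Theorem lemma12 (R : realType) (d : measure_display) (T : measurableType d)
    (P : probability T R) (X Y : {RV P >-> R})
    (hX : forall t, 0 <= X t) (hY : forall t, 0 <= Y t) :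
  ss_ge P X Y <->
  (forall h : R -> R, star_shaped h -> ss_ge P (h \o X) (h \o Y)).
Proof.
split=> [XY h sh u su|ss_comp].
  exact: (XY (u \o h) (star_shaped_comp su sh)).
exact: ss_comp (star_shaped_id R).
Qed.
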